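(* For propositional formulae $S_1,S_2$, the lexicographic orders $[S_1,S_2]$ and $[S_1]$ are equivalent if and only if at least one of the following holds: (1) $S_2$ is inconsistent; (2) $S_2$ is tautological; (3) $S_2$ is equivalent to $S_1$; (4) $S_2$ is equivalent to $\neg S_1$.
   Context: Models are truth assignments. For a formula $F$: $I \leq_F J$ iff $I \models F$ or $J \not\models F$. For a sequence $S=[S_1,\ldots,S_m]$: $I \leq_S J$ iff either $S=[]$, or ($I \leq_{S_1} J$ and (either $J \not\leq_{S_1} I$ or $I \leq_R J$)), where $R=[S_2,\ldots,S_m]$. Two sequences $S$ and $R$ are equivalent if $I \leq_S J$ and $I\leq_R J$ coincide for all pairs of models $I,J$. *)

From Stdlib Require Import List Bool.
Import ListNotations.

Inductive formula : Type :=
  | FVar : nat -> formula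
  | FTrue : formula
  | FFalse : formula
  | FNot : formula -> formula
  | FAnd : formula -> formula -> formula
  | FOr : formula -> formula -> formula
  | FImp : formula -> formula -> formula.

Definition model := nat -> bool.

Fixpoint sat (I : model) (F : formula) : Prop :=
  match F with
  | FVar n => I n = true
  | FTrue => True
  | FFalse => False
  | FNot G => ~ sat I G
  | FAnd G H => sat I G /\ sat I H
  | FOr G H => sat I G \/ sat I H
  | FImp G H => sat I G -> sat I H
  end.

Definition le_form (F : formula) (I J : model) : Prop := sat I F \/ ~ sat J F.

Fixpoint le_seq (S : list formula) (I J : model) : Prop :=
  match S with
  | [] => True
  | S1 :: R => le_form S1 I J /\ (~ le_form S1 J I \/ le_seq R I J)
  end.

Definition seq_equiv (S R : list formula) : Prop :=
  forall I J : model, le_seq S I J <-> le_seq R I J.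

Definition inconsistent (F : formula) : Prop := forall I : model, ~ sat I F.
Definition tautological (F : formula) : Prop := forall I : model, sat I F.
Definition form_equiv (F G : formula) : Prop := forall I : model, sat I F <-> sat I G.

(* The order [S1; S2] refines [S1] only inside a class of models that agree on S1,
   so the two orders coincide exactly when the truth value of S2 is a function of
   that of S1.  There are four functions from bool to bool: the constants, the
   identity and negation, i.e. S2 inconsistent, tautological, equivalent to S1 or
   to the negation of S1. *)

From Stdlib Require Import List Classical.
Import ListNotations.

Definition determined_by (F G : formula) : Prop :=
  forall I J : model, (sat I G <-> sat J G) -> (sat I F <-> sat J F).

Lemma le_form_both_iff (F : formula) (I J : model) :
  le_form F I J /\ le_form F J I <-> (sat I F <-> sat J F).
Proof.
  unfold le_form.
  destruct (classic (sat I F)), (classic (sat J F)); tauto.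
Qed.

Lemma le_seq_single (F : formula) (I J : model) :
  le_seq [F] I J <-> le_form F I J.
Proof. simpl; tauto. Qed.

Lemma seq_equiv_cons_single (F : formula) (R : list formula) :
  seq_equiv (F :: R) [F] <->
  (forall I J : model, (sat I F <-> sat J F) -> le_seq R I J).
Proof.
  unfold seq_equiv; split.
  - intros Hequiv I J Hsame.
    apply le_form_both_iff in Hsame as [HIJ HJI].
    destruct (proj2 (Hequiv I J) (proj2 (le_seq_single F I J) HIJ)) as [_ [HnJI | HR]].
    + contradiction.
    + exact HR.
  - intros Htail I J; simpl; split; [tauto |].
    intros [HIJ _]; split; [exact HIJ |].
    destruct (classic (le_form F J I)) as [HJI | HnJI]; [right | left; exact HnJI].
    apply Htail, le_form_both_iff; tauto.
Qed.

Lemma seq_equiv_pair_single (S1 S2 : formula) :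
  seq_equiv [S1; S2] [S1] <-> determined_by S2 S1.
Proof.
  rewrite seq_equiv_cons_single; unfold determined_by; split.
  - intros Htail I J Hsame.
    apply le_form_both_iff; split; apply le_seq_single, Htail; tauto.
  - intros Hdet I J Hsame.
    apply le_seq_single, (le_form_both_iff S2 I J), Hdet, Hsame.
Qed.

Lemma determined_by_classification (F G : formula) :
  determined_by F G <->
  (inconsistent F \/ tautological F \/ form_equiv F G \/ form_equiv F (FNot G)).
Proof.
  unfold determined_by, inconsistent, tautological, form_equiv; simpl; split.
  - intros Hdet.
    assert (Hspread : forall I, sat I F -> forall J, (sat I G <-> sat J G) -> sat J F)
      by (intros I HI J Hsame; apply (Hdet I J Hsame), HI).
    destruct (classic (exists I, sat I G /\ sat I F)) as [[I [HIG HIF]] | Hpos],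
             (classic (exists I, ~ sat I G /\ sat I F)) as [[K [HKG HKF]] | Hneg].
    + right; left; intros J.
      destruct (classic (sat J G)); [apply (Hspread I) | apply (Hspread K)]; tauto.
    + right; right; left; intros J; split.
      * intros HJF; apply NNPP; intros HJG; apply Hneg; eauto.
      * intros HJG; apply (Hspread I); tauto.
    + right; right; right; intros J; split.
      * intros HJF HJG; apply Hpos; eauto.
      * intros HJG; apply (Hspread K); tauto.
    + left; intros J HJF.
      destruct (classic (sat J G)); [apply Hpos | apply Hneg]; eauto.
  - intros [Hincons | [Htaut | [Heq | Hneg]]] I J Hsame.
    + pose proof (Hincons I); pose proof (Hincons J); tauto.
    + pose proof (Htaut I); pose proof (Htaut J); tauto.
    + rewrite (Heq I), (Heq J); exact Hsame.
    + rewrite (Hneg I), (Hneg J); tauto.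
Qed.

Theorem theorem4 (S1 S2 : formula) :
  seq_equiv [S1; S2] [S1] <->
  (inconsistent S2 \/ tautological S2 \/ form_equiv S2 S1 \/ form_equiv S2 (FNot S1)).
Proof.
  rewrite seq_equiv_pair_single.
  apply determined_by_classification.
Qed.
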